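(* Let $\mathbb A_1,\dots,\mathbb A_n\in\mathcal K$, let $R$ be a subdirect product of $\mathbb A_1\times\cdots\times\mathbb A_n$ and $I\subseteq[n]$. (1) For any element ${\bf b}\in\mathrm{pr}_IR$ that is maximal (respectively as-maximal, u-maximal) in $\mathrm{pr}_IR$, there is ${\bf b}'\in R$ that is maximal (respectively as-maximal, u-maximal) in $R$ with $\mathrm{pr}_I{\bf b}'={\bf b}$; in particular $\mathrm{pr}_{[n]\setminus I}{\bf b}'$ is maximal (respectively as-maximal, u-maximal) in $\mathrm{pr}_{[n]\setminus I}R$. (2) If ${\bf a}$ is maximal (respectively as-maximal, u-maximal) in $R$, then $\mathrm{pr}_I{\bf a}$ is maximal (respectively as-maximal, u-maximal) in $\mathrm{pr}_IR$.
   Context: All algebras are finite and idempotent; $\mathrm{Sg}(B)$ denotes the subalgebra generated by a set $B$; $\mathrm{pr}_I$ is projection onto the coordinates in $I$. Edges: for elements $a,b$ of an algebra $\mathbb A$ let $\mathbb B=\mathrm{Sg}(a,b)$. The pair $ab$ is an edge if there is a maximal congruence $\theta$ of $\mathbb B$ such that either $\mathbb B/\theta$ is a set (unary type), or $\mathbb B/\theta$ is term equivalent to the full idempotent reduct of a module and some term operation $f$ induces on $\mathbb B/\theta$ the affine operation $x-y+z$ (affine type), or some term operation $f$ with $f/\theta$ a semilattice operation on $\{a/\theta,b/\theta\}$, or one with $f/\theta$ a majority operation on $\{a/\theta,b/\theta\}$. Semilattice type: the semilattice option holds for some $\theta$; majority type: not semilattice type and the majority option holds for some $\theta$; $\{a/\theta,b/\theta\}$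 is a thick edge. $\mathbb A$ is smooth if for every edge $ab$ of semilattice or majority type with witness $\theta$, $a/\theta\cup b/\theta$ is a subalgebra. Standing assumption: $\mathcal K$ is a fixed finite class of similar smooth idempotent algebras, closed under subalgebras and homomorphic images, with no edges of unary type; term operations act coordinatewise on products, and all notions below are taken with respect to $\mathcal K$. Fixed binary term $\cdot$: semilattice operation on every thick semilattice edge of every algebra in $\mathcal K$, and for all $a,b$ either $a\cdot b=a$ or $(a,a\cdot b)$ is a thin semilattice edge. A thin semilattice edge is a pair $ab$ with $a\cdot b=b\cdot a=b$. A ternary term $g'$ satisfies the majority condition if $g'(x,g'(x,y,y),g'(x,y,y))=g'(x,y,y)$ in $\mathcal K$ and $g'$ is a majority operation on every thick majority edge of every algebra in $\mathcal K$. A ternary term $h'$ satisfies the minority condition if $h'(h'(x,y,y),y,y)=h'(x,y,y)$ in $\mathcal K$ and $h'$ induces the affine operation on $\mathrm{Sg}(a,b)/\theta$ for every affine edge $ab$ with witness $\theta$; such an $h$ is fixed. A (directed) pair $ab$ is a thin majority edge if for every $g'$ satisfying the majority condition each of $\mathrm{Sg}(a,g'(a,b,b))$, $\mathrm{Sg}(a,g'(b,a,b))$, $\mathrm{Sg}(a,g'(b,b,a))$ contains $b$. A pair $ab$ is a thin affine edge if $h(b,a,a)=b$ and $b\in\mathrm{Sg}(a,h'(a,a,b))$ for every $h'$ satisfying the minority condition. A path is a sequence $a_0,\dots,a_k$ where each $a_{i-1}a_i$ is a thin edge; it is an s-path if all are thin semilattice edges, an as-path if all are thin semilattice or thin affine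 edges, an asm-path in general. $a\sqsubseteq b$, $a\sqsubseteq^{as}b$, $a\sqsubseteq^{asm}b$ mean there is an s-, as-, asm-path from $a$ to $b$ in the algebra considered. $a$ is maximal (as-maximal, u-maximal) if $a\sqsubseteq b$ implies $b\sqsubseteq a$ (resp. the same with $\sqsubseteq^{as}$, $\sqsubseteq^{asm}$). *)

From HB Require Import structures.
From mathcomp Require Import all_boot all_algebra.
Set Implicit Arguments.
Unset Strict Implicit.
Unset Printing Implicit Defensive.
Import GRing.Theory.
Local Open Scope ring_scope.

Record sig := Sig { op : Type; arity : op -> nat }.

Record algebra (s : sig) := Alg {
  carrier :> finType;
  interp : forall o : op s, {ffun 'I_(arity o) -> carrier} -> carrier }.
Arguments interp {s a} o _.

Inductive term (s : sig) (V : Type) : Type :=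
| Var of V
| App (o : op s) of ('I_(arity o) -> term s V).
Arguments Var {s V}.
Arguments App {s V}.

Fixpoint eval (s : sig) (A : algebra s) (V : Type) (e : V -> A) (t : term s V)
  : A :=
  match t with
  | Var v => e v
  | App o f => interp o [ffun i => eval e (f i)]
  end.

Definition ev2 s (A : algebra s) (t : term s 'I_2) (x y : A) : A :=
  eval (fun i : 'I_2 => if val i == 0%N then x else y) t.
Definition ev3 s (A : algebra s) (t : term s 'I_3) (x y z : A) : A :=
  eval (fun i : 'I_3 => if val i == 0%N then x
                        else if val i == 1%N then y else z) t.

Definition idempotent s (A : algebra s) : Prop :=
  forall (o : op s) (x : A), interp o [ffun => x] = x.

Definition hom s (A C : algebra s) (f : A -> C) : Prop :=
  forall (o : op s) (x : {ffun 'I_(arity o) -> A}),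
    f (interp o x) = interp o [ffun i => f (x i)].

Definition isomorphic s (A C : algebra s) : Prop :=
  exists f : A -> C, hom f /\ bijective f.

Definition subuniv s (A : algebra s) (U : A -> Prop) : Prop :=
  forall (o : op s) (x : {ffun 'I_(arity o) -> A}),
    (forall i, U (x i)) -> U (interp o x).

Definition Sg s (A : algebra s) (B : A -> Prop) : A -> Prop :=
  fun x => forall U : A -> Prop, subuniv U -> (forall y, B y -> U y) -> U x.

Definition Sg2 s (A : algebra s) (a b : A) : A -> Prop :=
  Sg (fun x => x = a \/ x = b).

(* theta is a congruence of the subalgebra with universe B (theta is a
   relation on A whose field is contained in B) *)
Definition congr s (A : algebra s) (B : A -> Prop) (th : A -> A -> Prop) : Prop :=
  [/\ forall x y, th x y -> B x /\ B y,
      forall x, B x -> th x x,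
      forall x y, th x y -> th y x,
      forall x y z, th x y -> th y z -> th x z &
      forall (o : op s) (x y : {ffun 'I_(arity o) -> A}),
        (forall i, th (x i) (y i)) -> th (interp o x) (interp o y)].

Definition maxcongr s (A : algebra s) (B : A -> Prop) (th : A -> A -> Prop) : Prop :=
  [/\ congr B th,
      exists x y, B x /\ B y /\ ~ th x y &
      forall th' : A -> A -> Prop, congr B th' ->
        (forall x y, th x y -> th' x y) ->
        (forall x y, th' x y -> th x y) \/ (forall x y, B x -> B y -> th' x y)].

Section Options.
Variables (s : sig) (A : algebra s) (a b : A) (th : A -> A -> Prop).
Let B := Sg2 a b.

(* B/theta is a set: every term operation is (mod theta) a projection *)
Definition set_opt : Prop :=
  forall (k : nat) (t : term s 'I_k), exists i : 'I_k,
    forall x : 'I_k -> A, (forall j, B (x j)) -> th (eval x t) (x i).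

(* phi : B -> M induces a bijection B/theta -> M such that B/theta is term
   equivalent to the full idempotent reduct of the R-module M *)
Definition affine_witness (R : pzRingType) (M : lmodType R) (phi : A -> M) : Prop :=
  [/\ forall x y, B x -> B y -> (phi x = phi y <-> th x y),
      forall m : M, exists x, B x /\ phi x = m,
      forall (k : nat) (t : term s 'I_k), exists r : 'I_k -> R,
        \sum_(i < k) r i = 1 /\
        forall x : 'I_k -> A, (forall j, B (x j)) ->
          phi (eval x t) = \sum_(i < k) r i *: phi (x i) &
      forall (k : nat) (r : 'I_k -> R), \sum_(i < k) r i = 1 ->
        exists t : term s 'I_k,
        forall x : 'I_k -> A, (forall j, B (x j)) ->
          phi (eval x t) = \sum_(i < k) r i *: phi (x i)].

Definition affine_opt : Prop :=
  exists (R : pzRingType) (M : lmodType R) (phi : A -> M),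
    affine_witness phi /\
    exists f : term s 'I_3, forall x y z, B x -> B y -> B z ->
      phi (ev3 f x y z) = phi x - phi y + phi z.

(* some binary term operation is a semilattice operation on {a/th, b/th} *)
Definition semi_opt : Prop :=
  exists f : term s 'I_2,
    th (ev2 f a b) (ev2 f b a) /\ (th (ev2 f a b) a \/ th (ev2 f a b) b).

Definition is_majority_on (f : term s 'I_3) : Prop :=
  forall x y, (x = a \/ x = b) -> (y = a \/ y = b) ->
    [/\ th (ev3 f x x y) x, th (ev3 f x y x) x & th (ev3 f y x x) x].

Definition maj_opt : Prop := exists f : term s 'I_3, is_majority_on f.

End Options.

Definition edge s (A : algebra s) (a b : A) : Prop :=
  exists th, maxcongr (Sg2 a b) th /\
    (set_opt a b th \/ affine_opt a b th \/ semi_opt a b th \/ maj_opt a b th).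

Definition semi_type s (A : algebra s) (a b : A) : Prop :=
  exists th, maxcongr (Sg2 a b) th /\ semi_opt a b th.
Definition maj_type s (A : algebra s) (a b : A) : Prop :=
  ~ semi_type a b /\ exists th, maxcongr (Sg2 a b) th /\ maj_opt a b th.
Definition affine_type s (A : algebra s) (a b : A) : Prop :=
  ~ semi_type a b /\ ~ maj_type a b /\
  exists th, maxcongr (Sg2 a b) th /\ affine_opt a b th.
Definition unary_type s (A : algebra s) (a b : A) : Prop :=
  edge a b /\ ~ semi_type a b /\ ~ maj_type a b /\ ~ affine_type a b.

Definition smooth s (A : algebra s) : Prop :=
  forall (a b : A) th, maxcongr (Sg2 a b) th ->
    (semi_opt a b th \/ (maj_type a b /\ maj_opt a b th)) ->
    subuniv (fun x => th x a \/ th x b).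

Definition standing_class s (K : algebra s -> Prop) : Prop :=
  [/\ (* finite class (up to isomorphism) *)
      exists l : seq (algebra s), forall A, K A ->
        exists i : 'I_(size l), isomorphic A (nth A l i),
      forall A, K A -> idempotent A /\ smooth A,
      (* closed under subalgebras (nonempty, up to isomorphism) *)
      forall (A C : algebra s) (f : C -> A), K A -> hom f -> injective f ->
        (exists c : C, True) -> K C,
      forall (A C : algebra s) (f : A -> C), K A -> hom f ->
        (forall c, exists x, f x = c) -> K C &
      forall (A : algebra s) (a b : A), K A -> ~ unary_type a b].

Definition thin_semi s (dot : term s 'I_2) (A : algebra s) (a b : A) : Prop :=
  ev2 dot a b = b /\ ev2 dot b a = b.

Definition dot_cond s (K : algebra s -> Prop) (dot : term s 'I_2) : Prop :=
  (forall (A : algebra s) (a b : A) th, K A -> maxcongr (Sg2 a b) th ->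
     semi_opt a b th ->
     th (ev2 dot a b) (ev2 dot b a) /\
     (th (ev2 dot a b) a \/ th (ev2 dot a b) b)) /\
  (forall (A : algebra s) (a b : A), K A ->
     ev2 dot a b = a \/
     thin_semi dot a (ev2 dot a b)).

Definition majority_condition s (K : algebra s -> Prop) (g : term s 'I_3) : Prop :=
  (forall (A : algebra s) (x y : A), K A ->
     ev3 g x (ev3 g x y y) (ev3 g x y y) = ev3 g x y y) /\
  (forall (A : algebra s) (a b : A) th, K A -> maj_type a b ->
     maxcongr (Sg2 a b) th -> maj_opt a b th -> is_majority_on a b th g).

Definition minority_condition s (K : algebra s -> Prop) (h : term s 'I_3) : Prop :=
  (forall (A : algebra s) (x y : A), K A ->
     ev3 h (ev3 h x y y) y y = ev3 h x y y) /\
  (forall (A : algebra s) (a b : A) th, K A -> affine_type a b ->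
     maxcongr (Sg2 a b) th ->
     forall (R : pzRingType) (M : lmodType R) (phi : A -> M),
       affine_witness a b th phi ->
       forall x y z, Sg2 a b x -> Sg2 a b y -> Sg2 a b z ->
         phi (ev3 h x y z) = phi x - phi y + phi z).


Definition thin_maj s (K : algebra s -> Prop) (A : algebra s) (a b : A) : Prop :=
  forall g, majority_condition K g ->
    [/\ Sg2 a (ev3 g a b b) b, Sg2 a (ev3 g b a b) b & Sg2 a (ev3 g b b a) b].

Definition thin_aff s (K : algebra s -> Prop) (h : term s 'I_3) (A : algebra s) (a b : A) : Prop :=
  ev3 h b a a = b /\
  forall h', minority_condition K h' -> Sg2 a (ev3 h' a a b) b.

Inductive pathkind := s_path | as_path | asm_path.

Definition thin_edge s (K : algebra s -> Prop) (dot : term s 'I_2) (h : term s 'I_3)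
    (k : pathkind) (A : algebra s) (a b : A) : Prop :=
  match k with
  | s_path => thin_semi dot a b
  | as_path => thin_semi dot a b \/ thin_aff K h a b
  | asm_path => thin_semi dot a b \/ thin_aff K h a b \/ thin_maj K a b
  end.

Inductive reach (A : Type) (E : A -> A -> Prop) (U : A -> Prop) : A -> A -> Prop :=
| reach_nil a : U a -> reach E U a a
| reach_cons a b c : U a -> E a b -> reach E U b c -> reach E U a c.

Definition maximal_in s (K : algebra s -> Prop) (dot : term s 'I_2) (h : term s 'I_3)
    (k : pathkind) (A : algebra s) (U : A -> Prop) (a : A) : Prop :=
  U a /\ forall b, reach (thin_edge K dot h k (A := A)) U a b ->
                   reach (thin_edge K dot h k (A := A)) U b a.

Definition prod_alg s (J : finType) (A : J -> algebra s) : algebra s :=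
  @Alg s {dffun forall j : J, A j}
    (fun o x => [ffun j => interp o [ffun i => x i j]]).

Definition subdirect s n (A : 'I_n -> algebra s) (R : prod_alg A -> Prop) : Prop :=
  subuniv R /\ forall (i : 'I_n) (c : A i), exists x, R x /\ x i = c.

Definition subidx n (I : {set 'I_n}) : finType := {i : 'I_n | i \in I}.

Definition proj s n (A : 'I_n -> algebra s) (I : {set 'I_n}) (x : prod_alg A)
  : prod_alg (fun j : subidx I => A (val j)) :=
  [ffun j : subidx I => x (val j)].

Definition prI s n (A : 'I_n -> algebra s) (I : {set 'I_n}) (R : prod_alg A -> Prop)
  : prod_alg (fun j : subidx I => A (val j)) -> Prop :=
  fun y => exists x, R x /\ proj I x = y.

Arguments prI {s n A} I R _.
Arguments proj {s n A} I x.
Arguments maximal_in {s} K dot h k {A} U a.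

From Pilot Require Import Defs.
From mathcomp Require Import all_boot all_algebra.
From Stdlib Require Import Classical ClassicalEpsilon.
Set Implicit Arguments.
Unset Strict Implicit.
Unset Printing Implicit Defensive.

(* The heart of the proof is a lifting property of thin edges: if [a] is in
   R and [pr_I a -> c] is a thin edge of pr_I R, then there is [d] in R with
   [pr_I d = c] and [a -> d] a thin edge of R.  For a semilattice edge one
   takes [d = a . c0] for any preimage [c0] of [c]; for affine and majority
   edges one takes a preimage [d] (normalised by [h] in the affine case)
   minimising the size of Sg(a,d), and minimality forces [d] into every
   Sg(a,G) with [G] in Sg(a,d) whose projection generates [c] together with
   [pr_I a].  Lifting edges one at a time lifts whole paths.  Since
   projections preserve thin edges (they are homomorphisms), (2) follows;
   for (1) one lifts [b], climbs to a maximal element of R in the finite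
   path preorder, and lifts the path back from [b] to correct the
   projection. *)

Lemma eval_hom s (A C : algebra s) (f : A -> C) V (e : V -> A) (e' : V -> C) t :
  Defs.hom f -> (forall v, e' v = f (e v)) -> f (eval e t) = eval e' t.
Proof.
move=> hf He; elim: t => [v|o g IH] /=; first by rewrite He.
by rewrite hf; congr (interp o _); apply/ffunP=> i; rewrite !ffunE IH.
Qed.

Lemma ev2_hom s (A C : algebra s) (f : A -> C) t x y :
  Defs.hom f -> f (ev2 t x y) = ev2 t (f x) (f y).
Proof. by move=> hf; apply: eval_hom => // v; case: ifP. Qed.

Lemma ev3_hom s (A C : algebra s) (f : A -> C) t x y z :
  Defs.hom f -> f (ev3 t x y z) = ev3 t (f x) (f y) (f z).
Proof. by move=> hf; apply: eval_hom => // v; case: ifP => //; case: ifP. Qed.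

Lemma eval_const s (A : algebra s) V (e : V -> A) x t :
  Defs.idempotent A -> (forall v, e v = x) -> eval e t = x.
Proof.
move=> hA He; elim: t => [v|o g IH] /=; first by rewrite He.
rewrite (_ : [ffun i => eval e (g i)] = [ffun => x]) ?hA //.
by apply/ffunP=> i; rewrite !ffunE IH.
Qed.

Lemma ev2_idem s (A : algebra s) t (x : A) : Defs.idempotent A -> ev2 t x x = x.
Proof. by move=> hA; apply: eval_const => // v; case: ifP. Qed.

Lemma eval_subuniv s (A : algebra s) (U : A -> Prop) V (e : V -> A) t :
  subuniv U -> (forall v, U (e v)) -> U (eval e t).
Proof.
move=> hU He; elim: t => [v|o g IH] //=.
by apply: hU => i; rewrite ffunE.
Qed.

Lemma ev2_subuniv s (A : algebra s) (U : A -> Prop) t x y :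
  subuniv U -> U x -> U y -> U (ev2 t x y).
Proof. by move=> hU ??; apply: eval_subuniv => // v; case: ifP. Qed.

Lemma ev3_subuniv s (A : algebra s) (U : A -> Prop) t x y z :
  subuniv U -> U x -> U y -> U z -> U (ev3 t x y z).
Proof. by move=> hU ???; apply: eval_subuniv => // v; case: ifP => //; case: ifP. Qed.

Section TwoGenerated.
Variables (s : sig) (A : algebra s).

Lemma Sg2_subuniv (a b : A) : subuniv (Sg2 a b).
Proof. by rewrite /Sg2 /Sg => o x Hx U hU hB; apply: (hU) => i; exact: (Hx i U hU hB). Qed.

Lemma Sg2_l (a b : A) : Sg2 a b a.
Proof. by rewrite /Sg2 /Sg =>  U _ hB; apply: hB; left. Qed.

Lemma Sg2_r (a b : A) : Sg2 a b b.
Proof. by rewrite /Sg2 /Sg =>  U _ hB; apply: hB; right. Qed.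

Lemma Sg2_min (U : A -> Prop) (a b : A) :
  subuniv U -> U a -> U b -> forall x, Sg2 a b x -> U x.
Proof. by move=> hU ha hb x Hx; apply: Hx => // y [->|->]. Qed.

Lemma Sg2_trans (a y e : A) : Sg2 a y e -> forall z, Sg2 a e z -> Sg2 a y z.
Proof. by move=> He; apply: Sg2_min => //; [exact: Sg2_subuniv | exact: Sg2_l]. Qed.

End TwoGenerated.
Arguments Sg2_subuniv {s A} a b.
Arguments Sg2_l {s A} a b.
Arguments Sg2_r {s A} a b.

Lemma Sg2_image s (A C : algebra s) (f : A -> C) (x y z : A) :
  Defs.hom f -> Sg2 x y z -> Sg2 (f x) (f y) (f z).
Proof.
move=> hf; apply: (Sg2_min (U := fun w => Sg2 (f x) (f y) (f w))).
- by move=> o xs Hx; rewrite hf; apply: Sg2_subuniv => i; rewrite ffunE; exact: Hx.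
- exact: Sg2_l.
- exact: Sg2_r.
Qed.

Lemma Sg2_preimage s (A C : algebra s) (f : A -> C) (x y : A) w :
  Defs.hom f -> Sg2 (f x) (f y) w -> exists z, Sg2 x y z /\ f z = w.
Proof.
move=> hf; apply: (Sg2_min (U := fun w => exists z, Sg2 x y z /\ f z = w)).
- move=> o ys Hy; have [zf Hz] := fin_all_exists Hy.
  exists (interp o [ffun i => zf i]); split.
    by apply: Sg2_subuniv => i; rewrite ffunE; case: (Hz i).
  by rewrite hf; congr (interp o _); apply/ffunP=> i; rewrite !ffunE; case: (Hz i).
- by exists x; split => //; exact: Sg2_l.
- by exists y; split => //; exact: Sg2_r.
Qed.

Lemma coord_hom s (J : finType) (A : J -> algebra s) (j : J) :
  Defs.hom (fun x : prod_alg A => (x j : A j)).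
Proof. by move=> o x /=; rewrite ffunE. Qed.

Lemma proj_hom s n (A : 'I_n -> algebra s) (I : {set 'I_n}) :
  Defs.hom (proj (A := A) I).
Proof.
move=> o x; apply/ffunP=> j; rewrite /proj /= !ffunE.
by congr (interp o _); apply/ffunP=> i; rewrite !ffunE.
Qed.

Lemma ev2_coord s (J : finType) (A : J -> algebra s) t (x y : prod_alg A) j :
  ev2 t x y j = ev2 t (x j) (y j).
Proof. exact: (ev2_hom t x y (coord_hom (A := A) j)). Qed.

Lemma ev3_coord s (J : finType) (A : J -> algebra s) t (x y z : prod_alg A) j :
  ev3 t x y z j = ev3 t (x j) (y j) (z j).
Proof. exact: (ev3_hom t x y z (coord_hom (A := A) j)). Qed.

Definition predb (T : finType) (P : T -> Prop) : {pred T} :=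
  [pred x | if excluded_middle_informative (P x) then true else false].

Lemma predbP (T : finType) (P : T -> Prop) x : x \in predb P <-> P x.
Proof. by rewrite inE; case: excluded_middle_informative. Qed.

Lemma card_predb_mono (T : finType) (S1 S2 : T -> Prop) :
  (forall x, S1 x -> S2 x) -> #|predb S1| <= #|predb S2|.
Proof. by move=> H; apply: subset_leq_card; apply/subsetP => x /predbP /H /predbP. Qed.

Lemma card_predb_absorb (T : finType) (S1 S2 : T -> Prop) :
  (forall x, S1 x -> S2 x) -> #|predb S2| <= #|predb S1| -> forall x, S2 x -> S1 x.
Proof.
move=> H12 Hc.
have sub : predb S1 \subset predb S2 by apply/subsetP => x /predbP /H12 /predbP.
have := (subset_leqif_card sub).2; rewrite eqn_leq Hc (subset_leq_card sub).
by move=> /esym/subsetP HS x /predbP/HS/predbP.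
Qed.

Lemma exists_min_measure (T : Type) (P : T -> Prop) (m : T -> nat) :
  (exists x, P x) -> exists x, P x /\ forall y, P y -> m x <= m y.
Proof.
move=> [x0 Px0].
pose Q n := if excluded_middle_informative (exists x, P x /\ m x = n)
            then true else false.
have ex : exists n, Q n.
  by exists (m x0); rewrite /Q; case: excluded_middle_informative => // [[]]; eauto.
case: (ex_minnP ex) => n; rewrite {1}/Q; case: excluded_middle_informative => //.
move=> [x [Px Hxn]] _ Hmin; subst n; exists x; split => // y Py; apply: Hmin.
by rewrite /Q; case: excluded_middle_informative => // [[]]; eauto.
Qed.

Section Reachability.
Variables (T : Type) (E : T -> T -> Prop) (U : T -> Prop).

Lemma reach_ends a b : reach E U a b -> U a /\ U b.
Proof. by elim => // x y z Ux _ _ [_ ?]. Qed.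

Lemma reach_trans a b c : reach E U a b -> reach E U b c -> reach E U a c.
Proof. by elim => // x y z Ux Exy _ IH Hc; apply: reach_cons Ux Exy (IH Hc). Qed.

Lemma reach_map (T' : Type) (E' : T' -> T' -> Prop) (U' : T' -> Prop) (f : T -> T') :
  (forall x y, E x y -> E' (f x) (f y)) -> (forall x, U x -> U' (f x)) ->
  forall a b, reach E U a b -> reach E' U' (f a) (f b).
Proof.
move=> HE HU a b; elim => [x Ux|x y z Ux Exy _ IH]; first exact/reach_nil/HU.
exact: reach_cons (HU _ Ux) (HE _ _ Exy) IH.
Qed.

End Reachability.

Lemma exists_maximal (T : finType) (E : T -> T -> Prop) (U : T -> Prop) x :
  U x -> exists y, reach E U x y /\ (forall z, reach E U y z -> reach E U z y).
Proof.
move=> Ux; have [N] := ubnP #|predb (reach E U x)|.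
elim: N x Ux => // N IH x Ux lt.
case: (classic (forall z, reach E U x z -> reach E U z x)) => [H|].
  by exists x; split => //; apply: reach_nil.
move=> /not_all_ex_not [z Hz]; have [Hxz Hzx] := imply_to_and _ _ Hz.
(* the set reachable from z is strictly smaller: it misses x *)
have Hp : predb (reach E U z) \proper predb (reach E U x).
  rewrite properE; apply/andP; split.
    by apply/subsetP => w /predbP Hw; apply/predbP; apply: reach_trans Hxz Hw.
  apply/negP => /subsetP /(_ x) H; apply: Hzx; apply/predbP; apply: H.
  exact/predbP/reach_nil.
have [|y [Hzy Hy]] := IH z (reach_ends Hxz).2.
  by apply: leq_trans (proper_card Hp) _; rewrite -ltnS.
by exists y; split => //; apply: reach_trans Hxz Hzy.
Qed.

Lemma thin_edge_hom s (K : algebra s -> Prop) dot h k (A C : algebra s)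
    (f : A -> C) (x y : A) :
  Defs.hom f -> thin_edge K dot h k x y -> thin_edge K dot h k (f x) (f y).
Proof.
move=> hf.
have Hs : thin_semi dot x y -> thin_semi dot (f x) (f y).
  by move=> [e1 e2]; split; rewrite -ev2_hom // ?e1 ?e2.
have Ha : thin_aff K h x y -> thin_aff K h (f x) (f y).
  move=> [e1 e2]; split; first by rewrite -ev3_hom // e1.
  by move=> h' Hh'; rewrite -ev3_hom //; apply: Sg2_image => //; apply: e2.
have Hm : thin_maj K x y -> thin_maj K (f x) (f y).
  by move=> H g /H [h1 h2 h3]; split; rewrite -ev3_hom //; apply: Sg2_image.
by case: k => /=; intuition.
Qed.

(* Minimality argument shared by affine and majority edges. *)
Lemma Sg2_minimal_absorb s (A C : algebra s) (f : A -> C) (T : A -> Prop)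
    (F : A -> A) (a d G : A) (c : C) :
  Defs.hom f -> (forall y, T y -> #|predb (Sg2 a d)| <= #|predb (Sg2 a y)|) ->
  (forall e, Sg2 a G e -> f e = c -> T (F e) /\ Sg2 a G (F e)) ->
  Sg2 a d G -> Sg2 (f a) (f G) c -> Sg2 a G d.
Proof.
move=> hf Hmin HF HG /(Sg2_preimage hf) [e [He /(HF _ He) [TFe GFe]]].
apply: (@card_predb_absorb _ (Sg2 a G) (Sg2 a d)); last exact: Sg2_r.
  exact: Sg2_trans HG.
apply: leq_trans (Hmin _ TFe) _; apply: card_predb_mono; exact: Sg2_trans GFe.
Qed.

Lemma thin_semi_dot s (dot : term s 'I_2) (A : algebra s) (a b : A) :
  Defs.idempotent A -> ev2 dot a b = a \/ thin_semi dot a (ev2 dot a b) ->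
  thin_semi dot a (ev2 dot a b).
Proof. by move=> hA [->|//]; split; apply: ev2_idem. Qed.

Section Lifting.
Variables (s : sig) (K : algebra s -> Prop) (dot : term s 'I_2) (h : term s 'I_3).
Variables (n : nat) (A : 'I_n -> algebra s) (R : prod_alg A -> Prop).
Variable I : {set 'I_n}.
Hypothesis R_subuniv : subuniv R.

Local Notation prA := (prod_alg A).
Local Notation prB := (prod_alg (fun j : subidx I => A (val j))).

Lemma proj_ev2 t (x y : prA) : proj I (ev2 t x y) = ev2 t (proj I x) (proj I y).
Proof. exact: (ev2_hom t x y (proj_hom (A := A) I)). Qed.

Lemma proj_ev3 t (x y z : prA) :
  proj I (ev3 t x y z) = ev3 t (proj I x) (proj I y) (proj I z).
Proof. exact: (ev3_hom t x y z (proj_hom (A := A) I)). Qed.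

(* Semilattice edges: use a . c0 for a preimage c0 of the target. *)
Lemma lift_thin_semi (a c0 : prA) :
  (forall j, Defs.idempotent (A j)) ->
  (forall j (x y : A j), ev2 dot x y = x \/ thin_semi dot x (ev2 dot x y)) ->
  R a -> R c0 -> thin_semi dot (proj I a) (proj I c0) ->
  exists d, [/\ R d, proj I d = proj I c0 & thin_semi dot a d].
Proof.
move=> Hid Hdot Ra Rc0 [e1 _]; exists (ev2 dot a c0); split.
- exact: ev2_subuniv.
- by rewrite proj_ev2.
- split; apply/ffunP => j; rewrite !ev2_coord.
  + by case: (thin_semi_dot (Hid j) (Hdot j (a j) (c0 j))).
  + by case: (thin_semi_dot (Hid j) (Hdot j (a j) (c0 j))).
Qed.

(* Affine edges: use an h-normalised preimage d minimising |Sg(a,d)|. *)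
Lemma lift_thin_aff (a : prA) c :
  (forall j (x y : A j), ev3 h (ev3 h x y y) y y = ev3 h x y y) ->
  R a -> prI I R c -> thin_aff K h (proj I a) c ->
  exists d, [/\ R d, proj I d = c & thin_aff K h a d].
Proof.
move=> Hh Ra [c0 [Rc0 Ec]] [e1 e2].
have h_retract (x y : prA) : ev3 h (ev3 h x y y) y y = ev3 h x y y.
  by apply/ffunP => j; rewrite !ev3_coord Hh.
pose T x := R x /\ proj I x = c /\ ev3 h x a a = x.
have [|d [[Rd [Pd Fd]] Hmin]] := exists_min_measure (fun x => #|predb (Sg2 a x)|)
    (ex_intro T (ev3 h c0 a a) _).
  by split; [exact: ev3_subuniv | rewrite proj_ev3 Ec e1 h_retract].
exists d; split => //; split => // h' Hh'.
have Sd := Sg2_subuniv a d.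
apply: (Sg2_minimal_absorb (proj_hom I) (T := T) (F := fun e => ev3 h e a a) (c := c)).
- exact: Hmin.
- move=> e He Ee; have SG := Sg2_subuniv a (ev3 h' a a d).
  have HFe : Sg2 a (ev3 h' a a d) (ev3 h e a a).
    exact: (ev3_subuniv h SG He (Sg2_l _ _) (Sg2_l _ _)).
  split => //; split; last by rewrite proj_ev3 Ee e1 h_retract.
  by apply: (Sg2_min R_subuniv Ra _ HFe); exact: ev3_subuniv.
- exact: (ev3_subuniv h' Sd (Sg2_l _ _) (Sg2_l _ _) (Sg2_r _ _)).
- by rewrite proj_ev3 Pd; apply: e2.
Qed.

(* Majority edges: use any preimage d minimising |Sg(a,d)|. *)
Lemma lift_thin_maj (a : prA) c :
  R a -> prI I R c -> thin_maj K (proj I a) c ->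
  exists d, [/\ R d, proj I d = c & thin_maj K a d].
Proof.
move=> Ra HRc Hc.
pose T x := R x /\ proj I x = c.
have [d [[Rd Pd] Hmin]] := exists_min_measure (fun x => #|predb (Sg2 a x)|) HRc.
have absorb G : Sg2 a d G -> Sg2 (proj I a) (proj I G) c -> Sg2 a G d.
  move=> HG; apply: (Sg2_minimal_absorb (proj_hom I) (T := T) (F := id) (c := c) Hmin) => // e He Ee.
  split => //; split => //.
  apply: (Sg2_min R_subuniv Ra _ He); exact: (Sg2_min R_subuniv Ra Rd HG).
exists d; split => // g /Hc [h1 h2 h3].
have Sd := Sg2_subuniv a d; have Sl := Sg2_l a d; have Sr := Sg2_r a d.
by split; apply: absorb; rewrite ?proj_ev3 ?Pd //; exact: (ev3_subuniv g Sd).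
Qed.

Lemma lift_thin_edge k (a : prA) c :
  standing_class K -> dot_cond K dot -> minority_condition K h ->
  (forall j, K (A j)) -> R a -> prI I R c ->
  thin_edge K dot h k (proj I a) c ->
  exists d, [/\ R d, proj I d = c & thin_edge K dot h k a d].
Proof.
move=> [_ HKid _ _ _] Hdot Hh HA Ra HRc.
have Hid j : Defs.idempotent (A j) by case: (HKid _ (HA j)).
have Hs : thin_semi dot (proj I a) c -> exists d, [/\ R d, proj I d = c & thin_semi dot a d].
  case: HRc => c0 [Rc0 <-].
  by apply: lift_thin_semi => // j x y; apply: Hdot.2.
have Ha := lift_thin_aff (fun j x y => Hh.1 (A j) x y (HA j)) Ra HRc.
have Hm := lift_thin_maj Ra HRc.
case: k => /= [/Hs|[/Hs|/Ha]|[/Hs|[/Ha|/Hm]]] [d [? ? ?]]; exists d; split; tauto.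
Qed.

Lemma lift_reach k :
  standing_class K -> dot_cond K dot -> minority_condition K h ->
  (forall j, K (A j)) ->
  forall x c, reach (thin_edge K dot h k (A := prB)) (prI I R) x c ->
  forall a, R a -> proj I a = x ->
  exists d, reach (thin_edge K dot h k (A := prA)) R a d /\ proj I d = c.
Proof.
move=> HK Hdot Hh HA x c; elim => [y _|y z w _ Eyz Hzw IH] a Ra Pa.
  by exists a; split => //; apply: reach_nil.
rewrite -Pa in Eyz.
have [d1 [Rd1 Pd1 Ed1]] := lift_thin_edge HK Hdot Hh HA Ra (reach_ends Hzw).1 Eyz.
have [d [Hd Pd]] := IH d1 Rd1 Pd1.
by exists d; split => //; apply: reach_cons Ra Ed1 Hd.
Qed.

End Lifting.

Section Maximality.
Variables (s : sig) (K : algebra s -> Prop) (dot : term s 'I_2) (h : term s 'I_3).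
Hypotheses (HK : standing_class K) (Hdot : dot_cond K dot) (Hh : minority_condition K h).
Variables (n : nat) (A : 'I_n -> algebra s) (R : prod_alg A -> Prop).
Hypotheses (HA : forall j, K (A j)) (R_subuniv : subuniv R).

Lemma reach_proj k (J : {set 'I_n}) (x y : prod_alg A) :
  reach (thin_edge K dot h k (A := prod_alg A)) R x y ->
  reach (thin_edge K dot h k (A := prod_alg (fun j : subidx J => A (val j))))
        (prI J R) (proj J x) (proj J y).
Proof.
apply: reach_map => [u v|u Ru]; last by exists u.
exact/thin_edge_hom/proj_hom.
Qed.

Lemma maximal_proj k (J : {set 'I_n}) (a : prod_alg A) :
  maximal_in K dot h k R a -> maximal_in K dot h k (prI J R) (proj J a).
Proof.
move=> [Ra Ha]; split; first by exists a.
move=> c /(lift_reach R_subuniv HK Hdot Hh HA) /(_ a Ra erefl) [d [Had <-]].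
exact/reach_proj/Ha.
Qed.

(* Part (1): a maximal element of pr_I R is the projection of a maximal
   element of R.  Climb from any preimage to a maximal element y of R, then
   lift the path from pr_I y back to b. *)
Lemma maximal_lift k (I : {set 'I_n}) b :
  maximal_in K dot h k (prI I R) b ->
  exists2 d, maximal_in K dot h k R d & proj I d = b.
Proof.
move=> [[x [Rx <-]] Hb].
have [y [Hxy Hy]] := exists_maximal (thin_edge K dot h k (A := prod_alg A)) Rx.
have [d [Hyd <-]] := lift_reach R_subuniv HK Hdot Hh HA
  (Hb _ (reach_proj I Hxy)) (reach_ends Hxy).2 erefl.
exists d => //; split; first exact: (reach_ends Hyd).2.
by move=> z Hdz; apply: reach_trans (Hy z (reach_trans Hyd Hdz)) Hyd.
Qed.

End Maximality.

Theorem corollary19 (s : sig) (K : algebra s -> Prop)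
    (dot : term s 'I_2) (h : term s 'I_3) :
  standing_class K -> dot_cond K dot -> minority_condition K h ->
  forall (n : nat) (A : 'I_n -> algebra s),
  (forall i, K (A i)) ->
  forall R : prod_alg A -> Prop, subdirect R ->
  forall (I : {set 'I_n}) (k : pathkind),
    (forall b, maximal_in K dot h k (prI I R) b ->
       exists b', [/\ maximal_in K dot h k R b', proj I b' = b &
                      maximal_in K dot h k (prI (~: I) R) (proj (~: I) b')]) /\
    (forall a, maximal_in K dot h k R a ->
       maximal_in K dot h k (prI I R) (proj I a)).
Proof.
move=> HK Hdot Hh n A HA R [R_subuniv _] I k; split.
- move=> b /(maximal_lift HK Hdot Hh HA R_subuniv) [d Md Pd].
  by exists d; split => //; apply: maximal_proj.
- exact: maximal_proj.
Qed.
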